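(* In the LTR setting, assume $|y(x)|\le M$ and $|\widetilde y_S(x)|\le M$ for all $x\in X$ and all training sets $S$, and that the pseudo-targets are $\beta_{loc}$-score-stable. Let $S,S'$ be two training sets differing in exactly one point, $h=h_S$, $h'=h_{S'}$ the LTR minimizers, $\Delta h=h'-h$ and $A=1+\kappa\sqrt{C+C'}$. Then for every $x\in X$, $$\frac{C}{m}\big[(h'(x)-y(x))^2-(h(x)-y(x))^2\big]+\frac{C'}{u}\big[(h'(x)-\widetilde y_{S'}(x))^2-(h(x)-\widetilde y_S(x))^2\big]\le 2AM\Big(\kappa\|\Delta h\|_K\Big(\frac Cm+\frac{C'}u\Big)+\beta_{loc}\frac{C'}u\Big).$$
   Context: Transductive setting: fixed full sample $X=\{x_1,\dots,x_{m+u}\}$ with real labels $y(x)$; training set $S\subset X$ of size $m$ with labels revealed, test set $T=X\setminus S$ of size $u$. Two training sets $S,S'$ differ in exactly one point if $S'=(S\setminus\{x\})\cup\{x'\}$ with $x\in S$, $x'\in X\setminus S$. LTR setting: $K$ is a positive semidefinite kernel on $X$ with $K(x,x)\le\kappa^2$ for all $x\in X$, $H_K$ its reproducing kernel Hilbert space with norm $\|\cdot\|_K$. For each training set $S$ a pseudo-target function $\widetilde y_S\colon X\to\mathbb{R}$ is given. With constants $C,C'\ge0$, the LTR objective is $$F(f,S)=\|f\|_K^2+\frac{C}{m}\sum_{x\in S}(f(x)-y(x))^2+\frac{C'}{u}\sum_{x\in T}(f(x)-\widetilde y_S(x))^2,$$ and the LTR algorithm returns $h_S=\arg\min_{f\in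 H_K}F(f,S)$. The pseudo-targets are $\beta_{loc}$-score-stable if $|\widetilde y_S(x)-\widetilde y_{S'}(x)|\le\beta_{loc}$ for all $x\in X$ and all pairs $S,S'$ differing in exactly one point. *)

From HB Require Import structures.
From mathcomp Require Import all_boot all_order all_algebra.
Set Implicit Arguments. Unset Strict Implicit. Unset Printing Implicit Defensive.
Import Order.TTheory GRing.Theory Num.Theory.
Local Open Scope ring_scope.

Section LTR.
Variables (R : rcfType) (X : finType).

(* Kernel K : X -> X -> R.  Elements of H_K are the functions
   f = \sum_z a z K(z, .) ; we represent them by coefficient vectors a. *)
Definition kfun (K : X -> X -> R) (a : X -> R) : X -> R :=
  fun x => \sum_(z : X) a z * K z x.

(* ||K a||_K^2 = a^T K a (reproducing property). *)
Definition kquad (K : X -> X -> R) (a : X -> R) : R :=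
  \sum_(z : X) \sum_(w : X) a z * a w * K z w.

Definition rkhs_norm (K : X -> X -> R) (a : X -> R) : R := Num.sqrt (kquad K a).

Definition psd_kernel (K : X -> X -> R) : Prop :=
  (forall z w, K z w = K w z) /\ (forall a : X -> R, 0 <= kquad K a).

Definition ltr_obj (K : X -> X -> R) (C C' : R) (m u : nat) (y : X -> R)
    (ytS : X -> R) (S : {set X}) (a : X -> R) : R :=
  kquad K a
  + C / m%:R * \sum_(x in S) (kfun K a x - y x) ^+ 2
  + C' / u%:R * \sum_(x in ~: S) (kfun K a x - ytS x) ^+ 2.

Definition is_ltr_min K C C' m u y ytS S (a : X -> R) : Prop :=
  forall b : X -> R, ltr_obj K C C' m u y ytS S a <= ltr_obj K C C' m u y ytS S b.

Definition differ_one (S S' : {set X}) : Prop :=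
  exists x x', [/\ x \in S, x' \notin S & S' = x' |: (S :\ x)].

Definition score_stable (m : nat) (yt : {set X} -> X -> R) (beta : R) : Prop :=
  forall S S' : {set X}, #|S| = m -> differ_one S S' ->
    forall x, `|yt S x - yt S' x| <= beta.

End LTR.

From HB Require Import structures.
From mathcomp Require Import all_boot all_order all_algebra.
From mathcomp Require Import ring lra.
Set Implicit Arguments. Unset Strict Implicit. Unset Printing Implicit Defensive.
Import Order.TTheory GRing.Theory Num.Theory.
Local Open Scope ring_scope.

(* The proof has three ingredients:
   1. Reproducing bound.  For a positive semidefinite kernel, Cauchy-Schwarz
      for the bilinear form a^T K b against the evaluation vector at x gives
      |f(x)| <= kappa ||f||_K; the inequality itself is the discriminant
      criterion for a nonnegative binary quadratic form.
   2. Size of a minimizer.  Comparing F(h_S, S) with F(0, S) bounds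
      ||h_S||_K^2 by (C + C') M^2, hence |h_S(x)| <= kappa sqrt(C + C') M.
   3. Difference of squares.  Residuals p - t with |p| <= B and |t| <= M
      are at most B + M = A M in size, so a squared residual changes by at
      most 2 A M (|p' - p| + |t - t'|).  Here |h'(x) - h(x)| is at most
      kappa ||h' - h||_K by 1, and |t - t'| is 0 for labels and at most
      beta_loc for pseudo-targets.
   The theorem adds the two bounds with weights C/m and C'/u. *)

Lemma quad_discriminant (R : realFieldType) (Q s k : R) :
  (forall t r : R, 0 <= t ^+ 2 * Q + 2 * t * r * s + r ^+ 2 * k) ->
  s ^+ 2 <= Q * k.
Proof.
move=> q.
have [k_gt0|k_lt0|k0] := ltrgt0P k.
- have : 0 <= k * (k * Q - s ^+ 2) by have := q k (- s); congr (0 <= _); ring.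
  by rewrite pmulr_rge0 // subr_ge0 mulrC.
- by have := q 0 1; rewrite !expr2; lra.
- move: q; rewrite k0 mulr0 => q.
  by have := q 1 (- s); have := q (- s) Q; rewrite !expr2 => *; nra.
Qed.

Lemma sqr_diff_le (R : realDomainType) (p q L : R) :
  `|p| <= L -> `|q| <= L -> p ^+ 2 - q ^+ 2 <= 2 * L * `|p - q|.
Proof.
move=> pL qL; rewrite subr_sqr mulrC.
apply: le_trans (ler_norm _) _; rewrite normrM ler_wpM2r //.
by rewrite mulr_natl mulr2n (le_trans (ler_normD _ _)) // lerD.
Qed.

Lemma sqr_residual_diff_le (R : realDomainType) (p p' t t' B M : R) :
  `|p| <= B -> `|p'| <= B -> `|t| <= M -> `|t'| <= M ->
  (p' - t') ^+ 2 - (p - t) ^+ 2 <= 2 * (B + M) * (`|p' - p| + `|t - t'|).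
Proof.
move=> pB p'B tM t'M.
have residual_le (q r : R) : `|q| <= B -> `|r| <= M -> `|q - r| <= B + M.
  by move=> qB rM; apply: le_trans (ler_normB _ _) (lerD qB rM).
have BM_ge0 : 0 <= B + M := le_trans (normr_ge0 _) (residual_le _ _ pB tM).
apply: le_trans (sqr_diff_le (residual_le _ _ p'B t'M) (residual_le _ _ pB tM)) _.
rewrite ler_wpM2l ?mulr_ge0 // (_ : _ - _ = (p' - p) + (t - t')); last by ring.
exact: ler_normD.
Qed.

Lemma mean_sqr_le (R : realFieldType) (T : finType) (A : {set T}) (f : T -> R)
    (C M : R) (n : nat) :
  (0 < n)%N -> #|A| = n -> 0 <= C -> (forall x, `|f x| <= M) ->
  C / n%:R * \sum_(x in A) f x ^+ 2 <= C * M ^+ 2.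
Proof.
move=> n_gt0 cardA C_ge0 fM.
have sum_le : \sum_(x in A) f x ^+ 2 <= M ^+ 2 *+ n.
  rewrite -cardA -sumr_const; apply: ler_sum => x _.
  have M_ge0 : 0 <= M := le_trans (normr_ge0 _) (fM x).
  by rewrite -real_normK ?num_real // lerXn2r ?nnegrE.
apply: le_trans (ler_wpM2l (divr_ge0 C_ge0 (ler0n _ _)) sum_le) _.
by rewrite -(mulr_natr (M ^+ 2)) mulrA mulrAC divfK ?pnatr_eq0 -?lt0n.
Qed.

Lemma card_differ_one (X : finType) (S S' : {set X}) :
  differ_one S S' -> #|S'| = #|S|.
Proof.
case=> x [x' [xS x'S ->]].
by rewrite cardsU1 in_setD1 (negbTE x'S) andbF (cardsD1 x S) xS.
Qed.

Lemma card_complement (X : finType) (S : {set X}) (m u : nat) :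
  #|X| = (m + u)%N -> #|S| = m -> #|~: S| = u.
Proof. by move=> cardX cardS; apply/(@addnI m); rewrite -{1}cardS cardsC. Qed.

Section Kernel.
Variables (R : rcfType) (X : finType) (K : X -> X -> R).

Definition kbil (a b : X -> R) : R := \sum_(z : X) \sum_(w : X) a z * b w * K z w.

Lemma kbil_linl (t r : R) (a c b : X -> R) :
  kbil (fun z => t * a z + r * c z) b = t * kbil a b + r * kbil c b.
Proof.
rewrite /kbil !mulr_sumr -big_split; apply: eq_bigr => z _.
by rewrite !mulr_sumr -big_split; apply: eq_bigr => w _; rewrite !mulrDl !mulrA.
Qed.

Lemma kbil_sym (a b : X -> R) : (forall z w, K z w = K w z) -> kbil a b = kbil b a.
Proof.
move=> Ksym; rewrite /kbil exchange_big; apply: eq_bigr => z _.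
by apply: eq_bigr => w _; rewrite Ksym [b z * _]mulrC.
Qed.

(* The coefficient vector of the representer K(x, .) of evaluation at x. *)
Definition delta (x : X) : X -> R := fun z => (z == x)%:R.

Lemma sum_delta (F : X -> R) (x : X) : \sum_(w : X) F w * delta x w = F x.
Proof.
rewrite (bigD1 x) //= big1 ?addr0 /delta ?eqxx ?mulr1 // => w /negbTE ->.
by rewrite mulr0.
Qed.

Lemma kbil_delta (a : X -> R) (x : X) : kbil a (delta x) = kfun K a x.
Proof.
rewrite /kbil /kfun; apply: eq_bigr => z _.
rewrite -(sum_delta (fun w => a z * K z w) x); apply: eq_bigr => w _.
by rewrite mulrAC.
Qed.

Lemma kfun_delta (x : X) : kfun K (delta x) x = K x x.
Proof.
rewrite /kfun -[RHS](sum_delta (fun w => K w x) x).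
by apply: eq_bigr => w _; rewrite mulrC.
Qed.

Lemma kfun_sub (a a' : X -> R) (x : X) :
  kfun K (fun z => a' z - a z) x = kfun K a' x - kfun K a x.
Proof. by rewrite /kfun -sumrB; apply: eq_bigr => z _; rewrite mulrBl. Qed.

Lemma kfun0 (x : X) : kfun K (fun _ => 0) x = 0.
Proof. by rewrite /kfun big1 // => z _; rewrite mul0r. Qed.

Lemma kquad0 : kquad K (fun _ => 0) = 0.
Proof. by rewrite /kquad big1 // => z _; rewrite big1 // => w _; rewrite !mul0r. Qed.

Hypothesis K_psd : psd_kernel K.

Lemma kquad_comb (b : X -> R) (x : X) (t r : R) :
  kquad K (fun z => t * b z + r * delta x z)
  = t ^+ 2 * kquad K b + 2 * t * r * kfun K b x + r ^+ 2 * K x x.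
Proof.
have [Ksym _] := K_psd.
rewrite [LHS]kbil_linl !(kbil_sym _ (fun z => _ + _) Ksym) !kbil_linl.
rewrite (kbil_sym (delta x) b Ksym) !kbil_delta kfun_delta.
by rewrite /kbil -/(kquad K b); ring.
Qed.

Lemma kfun_sqr_le (b : X -> R) (x : X) : kfun K b x ^+ 2 <= kquad K b * K x x.
Proof.
apply: quad_discriminant => t r; rewrite -kquad_comb; case: K_psd => _; exact.
Qed.

Variable kappa : R.
Hypotheses (kappa_ge0 : 0 <= kappa) (K_diag : forall x, K x x <= kappa ^+ 2).

Lemma kfun_norm_le (b : X -> R) (x : X) :
  `|kfun K b x| <= kappa * rkhs_norm K b.
Proof.
have [_ Q_ge0] := K_psd.
rewrite -sqrtr_sqr mulrC /rkhs_norm.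
apply: le_trans (ler_wsqrtr (kfun_sqr_le b x)) _.
rewrite sqrtrM // ler_wpM2l ?sqrtr_ge0 //.
by rewrite -[leRHS](ger0_norm kappa_ge0) -sqrtr_sqr ler_wsqrtr.
Qed.

Variables (C C' M : R) (m u : nat) (y yt0 : X -> R) (S0 : {set X}) (a : X -> R).
Hypotheses (m_gt0 : (0 < m)%N) (u_gt0 : (0 < u)%N).
Hypotheses (cardS0 : #|S0| = m) (cardT0 : #|~: S0| = u).
Hypotheses (C_ge0 : 0 <= C) (C'_ge0 : 0 <= C') (M_ge0 : 0 <= M).
Hypotheses (y_bound : forall x, `|y x| <= M) (yt0_bound : forall x, `|yt0 x| <= M).
Hypothesis a_min : is_ltr_min K C C' m u y yt0 S0 a.

(* A minimizer is no more costly than the zero function, whose objective is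
   at most (C + C') M^2. *)
Lemma ltr_min_kquad_le : kquad K a <= (C + C') * M ^+ 2.
Proof.
have loss_ge0 (c : R) (n : nat) (A : {set X}) (g : X -> R) :
    0 <= c -> 0 <= c / n%:R * \sum_(x in A) (kfun K a x - g x) ^+ 2.
  by move=> c_ge0; rewrite mulr_ge0 ?divr_ge0 ?sumr_ge0 // => *; exact: sqr_ge0.
have kquad_le_obj : kquad K a <= ltr_obj K C C' m u y yt0 S0 a.
  by rewrite /ltr_obj -addrA lerDl addr_ge0 // loss_ge0.
apply: le_trans kquad_le_obj (le_trans (a_min (fun _ => 0)) _).
rewrite /ltr_obj kquad0 add0r mulrDl.
under eq_bigr do rewrite kfun0 sub0r sqrrN.
under [in X in _ + X]eq_bigr do rewrite kfun0 sub0r sqrrN.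
by rewrite lerD // mean_sqr_le.
Qed.

Lemma ltr_min_bound (x : X) :
  `|kfun K a x| <= kappa * Num.sqrt (C + C') * M.
Proof.
apply: le_trans (kfun_norm_le a x) _.
rewrite -mulrA ler_wpM2l // -[M in leRHS](ger0_norm M_ge0) -sqrtr_sqr.
by rewrite -sqrtrM ?addr_ge0 // ler_wsqrtr // ltr_min_kquad_le.
Qed.

End Kernel.

Theorem lemma11 (R : rcfType) (X : finType) (m u : nat)
  (y : X -> R) (K : X -> X -> R) (kappa C C' M beta : R)
  (yt : {set X} -> X -> R) (S S' : {set X}) (a a' : X -> R) :
  (0 < m)%N -> (0 < u)%N -> #|X| = (m + u)%N ->
  psd_kernel K -> 0 <= kappa -> (forall x, K x x <= kappa ^+ 2) ->
  0 <= C -> 0 <= C' ->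
  (forall x, `|y x| <= M) ->
  (forall (S0 : {set X}) x, #|S0| = m -> `|yt S0 x| <= M) ->
  score_stable m yt beta ->
  #|S| = m -> differ_one S S' ->
  is_ltr_min K C C' m u y (yt S) S a ->
  is_ltr_min K C C' m u y (yt S') S' a' ->
  let h := kfun K a in
  let h' := kfun K a' in
  let A := 1 + kappa * Num.sqrt (C + C') in
  forall x : X,
    C / m%:R * ((h' x - y x) ^+ 2 - (h x - y x) ^+ 2)
    + C' / u%:R * ((h' x - yt S' x) ^+ 2 - (h x - yt S x) ^+ 2)
    <= 2 * A * M * (kappa * rkhs_norm K (fun z => a' z - a z) * (C / m%:R + C' / u%:R)
                    + beta * (C' / u%:R)).
Proof.
move=> m_gt0 u_gt0 cardX K_psd kappa_ge0 K_diag C_ge0 C'_ge0 y_bound yt_bound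
  stable cardS dS a_min a'_min h h' A x.
have M_ge0 : 0 <= M := le_trans (normr_ge0 _) (y_bound x).
have cardS' : #|S'| = m by rewrite (card_differ_one dS).
have ltr_bound (S0 : {set X}) (b : X -> R) : #|S0| = m ->
    is_ltr_min K C C' m u y (yt S0) S0 b ->
    `|kfun K b x| <= kappa * Num.sqrt (C + C') * M.
  move=> cardS0 b_min.
  exact: (ltr_min_bound K_psd kappa_ge0 K_diag m_gt0 u_gt0 cardS0
    (card_complement cardX cardS0) C_ge0 C'_ge0 M_ge0 y_bound
    (fun z => yt_bound S0 z cardS0) b_min).
have hS := ltr_bound S a cardS a_min; have hS' := ltr_bound S' a' cardS' a'_min.
have BM : kappa * Num.sqrt (C + C') * M + M = A * M by rewrite /A; ring.
have dh : `|h' x - h x| <= kappa * rkhs_norm K (fun z => a' z - a z).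
  by rewrite -kfun_sub kfun_norm_le.
set N := kappa * rkhs_norm K _ in dh *.
have AM_ge0 : 0 <= 2 * A * M.
  by rewrite -mulrA -BM mulr_ge0 // addr_ge0 // (le_trans (normr_ge0 _) hS).
have label_le : (h' x - y x) ^+ 2 - (h x - y x) ^+ 2 <= 2 * A * M * N.
  apply: le_trans (sqr_residual_diff_le hS hS' (y_bound x) (y_bound x)) _.
  by rewrite BM mulrA subrr normr0 addr0 ler_wpM2l.
have pseudo_le :
    (h' x - yt S' x) ^+ 2 - (h x - yt S x) ^+ 2 <= 2 * A * M * (N + beta).
  apply: le_trans (sqr_residual_diff_le hS hS' (yt_bound S x cardS)
                                        (yt_bound S' x cardS')) _.
  by rewrite BM mulrA ler_wpM2l // lerD // stable.
rewrite (_ : 2 * A * M * _ = C / m%:R * (2 * A * M * N)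
                              + C' / u%:R * (2 * A * M * (N + beta))); last by ring.
by rewrite lerD // ler_wpM2l ?divr_ge0.
Qed.
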